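(* Let $\mathcal{X},\mathcal{Y}$ be finite sets, $P$ a strictly positive joint pmf on $\mathcal{X}\times\mathcal{Y}$, $\rho>0$ and $q\in\mathbb{R}\setminus\{0\}$. Let $G$ be any conditional guessing function and let $Q^{(G)}(x,y)=\frac{1}{|\mathcal{Y}|\,s\,G(x|y)^{(1+\rho)/q}}$ with $s=\sum_{i=1}^{|\mathcal{X}|}i^{-(1+\rho)/q}$. Then $$ \left|R_{q,\rho}(P,G)-q\,\mathcal{RE}_{(\frac{q}{1+\rho},q)}(P,Q^{(G)})\right|\;\leq\;\ln(1+\ln|\mathcal{X}|). $$
   Context: A conditional guessing function is a map $G(\cdot|\cdot)$ on $\mathcal{X}\times\mathcal{Y}$ such that for each $y$, $x\mapsto G(x|y)$ is a bijection from $\mathcal{X}$ onto $\{1,\dots,|\mathcal{X}|\}$. The $q$-normalized expectation under $P$ is $E_q[F(X,Y)]=\frac{\sum_{x,y}F(x,y)P(x,y)^q}{\sum_{x,y}P(x,y)^q}$. With $P(x|y)=P(x,y)/\sum_{x'}P(x',y)$ and $P_q(x|y)=P(x|y)^q/\sum_{x'}P(x'|y)^q$, let $G^\ast_P$ be any conditional guessing function such that $G^\ast_P(x|y)<G^\ast_P(x'|y)$ implies $P_q(x|y)\ge P_q(x'|y)$. The redundancy is $R_{q,\rho}(P,G)=\frac1\rho\ln E_q[G(X|Y)^\rho]-\frac1\rho\ln E_q[G^\ast_P(X|Y)^\rho]$, expectations w.r.t. $P$. For strictly positive joint pmfs $P,Q$ on $\mathcal{X}\times\mathcal{Y}$ and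 $\alpha\neq\beta$ with $\alpha\beta\neq 0$, the conditional relative $(\alpha,\beta)$-entropy is $$\mathcal{RE}_{(\alpha,\beta)}(P,Q)=\frac{\alpha}{\beta(\beta-\alpha)}\ln\frac{\sum_{y}\left\{\sum_{x}P(x,y)^\beta Q(x,y)^{\alpha-\beta}\right\}\left\{\sum_{x}Q(x,y)^{\alpha}\right\}^{\frac{\beta}{\alpha}-1}}{\sum_{y}\left\{\sum_{x}P(x,y)^\alpha\right\}^{\frac{\beta}{\alpha}}};$$ in particular $q\,\mathcal{RE}_{(\frac{q}{1+\rho},q)}(P,Q)=\frac1\rho\ln\frac{\sum_y\{\sum_x P(x,y)^qQ(x,y)^{\alpha-q}\}\{\sum_xQ(x,y)^\alpha\}^{\rho}}{\sum_y\{\sum_xP(x,y)^\alpha\}^{1+\rho}}$ with $\alpha=\frac{q}{1+\rho}$. *)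

From Stdlib Require Import Reals.
From mathcomp Require Import all_boot.
Set Implicit Arguments. Unset Strict Implicit. Unset Printing Implicit Defensive.

Local Open Scope R_scope.

Definition rsum (T : finType) (f : T -> R) : R := \big[Rplus/R0]_(i : T) f i.

Section Defs.
Variables (X Y : finType).

Definition pos_pmf (P : X -> Y -> R) : Prop :=
  (forall x y, 0 < P x y) /\ rsum (fun x : X => rsum (fun y : Y => P x y)) = 1.

Definition guessing_fun (G : X -> Y -> nat) : Prop :=
  forall y, injective (fun x => G x y) /\
    (forall x, (1 <= G x y <= #|X|)%N) /\
    (forall k, (1 <= k <= #|X|)%N -> exists x, G x y = k).

Definition Eq (q : R) (P : X -> Y -> R) (F : X -> Y -> R) : R :=
  rsum (fun x : X => rsum (fun y : Y => F x y * Rpower (P x y) q)) /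
  rsum (fun x : X => rsum (fun y : Y => Rpower (P x y) q)).

Definition cond (P : X -> Y -> R) (x : X) (y : Y) : R :=
  P x y / rsum (fun x' : X => P x' y).

Definition cond_q (q : R) (P : X -> Y -> R) (x : X) (y : Y) : R :=
  Rpower (cond P x y) q / rsum (fun x' : X => Rpower (cond P x' y) q).

Definition optimal_guess (q : R) (P : X -> Y -> R) (G : X -> Y -> nat) : Prop :=
  guessing_fun G /\
  forall x x' y, (G x y < G x' y)%N -> cond_q q P x y >= cond_q q P x' y.

Definition redundancy (q rho : R) (P : X -> Y -> R) (G Gstar : X -> Y -> nat) : R :=
  / rho * ln (Eq q P (fun x y => Rpower (INR (G x y)) rho))
  - / rho * ln (Eq q P (fun x y => Rpower (INR (Gstar x y)) rho)).

Definition RE (alpha beta : R) (P Q : X -> Y -> R) : R :=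
  alpha / (beta * (beta - alpha)) *
  ln (rsum (fun y : Y =>
          rsum (fun x : X => Rpower (P x y) beta * Rpower (Q x y) (alpha - beta))
          * Rpower (rsum (fun x : X => Rpower (Q x y) alpha)) (beta / alpha - 1))
      / rsum (fun y : Y => Rpower (rsum (fun x : X => Rpower (P x y) alpha)) (beta / alpha))).

Definition s_const (q rho : R) : R :=
  \big[Rplus/R0]_(1 <= i < #|X|.+1) Rpower (INR i) (- ((1 + rho) / q)).

Definition QG (q rho : R) (G : X -> Y -> nat) (x : X) (y : Y) : R :=
  / (INR #|Y| * s_const q rho * Rpower (INR (G x y)) ((1 + rho) / q)).

End Defs.

From Stdlib Require Import Reals Lra.
From HB Require Import structures.
From mathcomp Require Import all_boot.
Set Implicit Arguments. Unset Strict Implicit. Unset Printing Implicit Defensive.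
Local Open Scope R_scope.

(* Write alpha = q/(1+rho), E(G) = sum_{x,y} G(x|y)^rho P(x,y)^q,
   D = sum_y (sum_x P(x,y)^alpha)^(1+rho) and H = sum_{i<=|X|} 1/i.
   The normalization of E_q cancels in the redundancy, so
   R_{q,rho}(P,G) = (1/rho) ln (E(G) / E(G')) with G' optimal; and since
   Q^(G)(x|y) is a power law in G(x|y), its normalizing constant cancels in
   RE, leaving q RE(alpha,q)(P,Q^(G)) = ln H + (1/rho) ln (E(G) / D).
   The difference is therefore (1/rho) ln (D / E(G')) - ln H.  Arikan's
   bounds E(G') <= D <= H^rho E(G') hold column by column: the first because
   the k-th optimal guess has at most a 1/k share of the column's alpha-mass,
   the second by Jensen's inequality for t |-> t^(1+rho) with the weights
   1/(H k).  Hence the difference lies in [-ln H, 0], and H <= 1 + ln |X|. *)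

(* Real addition is a commutative monoid law, so the generic bigop theory
   (splitting, exchanging and reindexing sums) applies to [rsum]. *)
Lemma Rplus_associative : associative Rplus.
Proof. by move=> a b c; ring. Qed.
HB.instance Definition _ :=
  Monoid.isComLaw.Build R R0 Rplus Rplus_associative Rplus_comm Rplus_0_l.

Section FiniteSums.
Variable T : finType.
Implicit Types (f g : T -> R).

Lemma rsum_ext f g : (forall i, f i = g i) -> rsum f = rsum g.
Proof. by move=> fg; apply: eq_bigr. Qed.

Lemma rsum_plus f g : rsum (fun i => f i + g i) = rsum f + rsum g.
Proof. exact: big_split. Qed.

Lemma rsum_scal c f : rsum (fun i => c * f i) = c * rsum f.
Proof.
apply: (big_ind2 (fun a b => a = c * b)) => //; first by rewrite Rmult_0_r.
by move=> ? ? ? ? -> ->; ring.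
Qed.

Lemma rsum_le f g : (forall i, f i <= g i) -> rsum f <= rsum g.
Proof.
move=> fg; apply: (big_ind2 (fun a b => a <= b)) => //; first lra.
by move=> ? ? ? ? ? ?; lra.
Qed.

Lemma rsum_gt0 (x0 : T) f : (forall i, 0 < f i) -> 0 < rsum f.
Proof.
move=> f_gt0; rewrite /rsum (bigD1 x0) //=.
have : 0 <= \big[Rplus/R0]_(i | i != x0) f i.
  apply: (big_ind (fun a => 0 <= a)) => [|? ? ? ?|i _]; [lra | lra |].
  exact: Rlt_le.
by have := f_gt0 x0; lra.
Qed.

End FiniteSums.

Lemma rsum_swap (X Y : finType) (F : X -> Y -> R) :
  rsum (fun x => rsum (fun y => F x y)) = rsum (fun y => rsum (fun x => F x y)).
Proof. exact: exchange_big. Qed.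

Lemma INR_nat_gt0 (n : nat) : (0 < n)%N -> 0 < INR n.
Proof. by move=> n_gt0; apply: lt_0_INR; apply/ltP. Qed.

Definition ranking (T : finType) (g : T -> nat) : Prop :=
  injective g /\ (forall x, (1 <= g x <= #|T|)%N) /\
  (forall k, (1 <= k <= #|T|)%N -> exists x, g x = k).

Definition harm (n : nat) : R := \big[Rplus/R0]_(1 <= i < n.+1) / INR i.

Lemma count_le_nat (m k : nat) :
  \big[Rplus/R0]_(1 <= i < m.+1) (if (i <= k)%N then 1 else 0) = INR (minn m k).
Proof.
elim: m => [|m IH]; first by rewrite big_geq // min0n.
rewrite big_nat_recr // IH.
change (INR (minn m k) + (if (m < k)%N then 1 else 0) = INR (minn m.+1 k)).
case: (ltnP m k) => [lt_mk|le_km].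
- by rewrite (minn_idPl lt_mk) S_INR; lra.
- by rewrite (minn_idPr (leq_trans le_km (leqnSn m))); lra.
Qed.

Section Rankings.
Variables (T : finType) (g : T -> nat).
Hypothesis g_rank : ranking g.

Lemma ranking_pos x : 0 < INR (g x).
Proof. by case: g_rank => _ [rng _]; apply: INR_nat_gt0; case/andP: (rng x). Qed.

Lemma ranking_sum (F : nat -> R) :
  rsum (fun x => F (g x)) = \big[Rplus/R0]_(1 <= i < #|T|.+1) F i.
Proof.
case: g_rank => inj [rng sur].
rewrite /rsum -(big_map g xpredT F); apply/perm_big/uniq_perm.
- by rewrite map_inj_uniq // index_enum_uniq.
- exact: iota_uniq.
move=> i; rewrite mem_iota subSS subn0 add1n ltnS; apply/mapP/idP.
- by case=> x _ ->; exact: rng.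
- by move=> /sur [x <-]; exists x; rewrite ?mem_index_enum.
Qed.

Lemma ranking_harm : rsum (fun x => / INR (g x)) = harm #|T|.
Proof. exact: (ranking_sum (fun i => / INR i)). Qed.

End Rankings.

Lemma ln_le_compat x y : 0 < x -> x <= y -> ln x <= ln y.
Proof. by move=> x_gt0 [lt_xy | ->]; [left; exact: ln_increasing | right]. Qed.

Lemma ln_le_sub1 u : 0 < u -> ln u <= u - 1.
Proof. by move=> u_gt0; have := exp_ineq1_le (ln u); rewrite exp_ln //; lra. Qed.

(* 1 <= H_n <= 1 + ln n, since 1/(k+1) <= ln (k+1) - ln k. *)
Lemma harm_bounds (n : nat) : (1 <= n)%N -> 1 <= harm n <= 1 + ln (INR n).
Proof.
elim: n => [//|[|n] IH] _; first by rewrite /harm big_nat1 /= Rinv_1 ln_1; lra.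
have [harm_ge1 harm_le] := IH isT.
have n1_gt0 : 0 < INR n.+1 by apply: INR_nat_gt0.
have n2_gt0 : 0 < INR n.+2 by apply: INR_nat_gt0.
have step : / INR n.+2 <= ln (INR n.+2) - ln (INR n.+1).
  have := ln_le_sub1 (Rdiv_lt_0_compat _ _ n1_gt0 n2_gt0).
  rewrite /Rdiv ln_mult ?ln_Rinv; try exact: Rinv_0_lt_compat; try done.
  have -> : INR n.+1 * / INR n.+2 - 1 = - / INR n.+2.
    by rewrite (S_INR n.+1); field; rewrite -S_INR; lra.
  lra.
have inv_gt0 : 0 < / INR n.+2 by exact: Rinv_0_lt_compat.
rewrite /harm big_nat_recr //.
change (1 <= harm n.+1 + / INR n.+2 <= 1 + ln (INR n.+2)); lra.
Qed.

Lemma harm_gt0 (n : nat) : (1 <= n)%N -> 0 < harm n.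
Proof. by move=> /harm_bounds; lra. Qed.

Lemma Rpower_gt0 x y : 0 < Rpower x y.
Proof. exact: exp_pos. Qed.

Lemma Rpower_inv x y : 0 < x -> Rpower (/ x) y = / Rpower x y.
Proof. by move=> x_gt0; rewrite /Rpower ln_Rinv // -exp_Ropp; congr exp; ring. Qed.

Lemma Rpower_1plus x r : 0 < x -> Rpower x (1 + r) = x * Rpower x r.
Proof. by move=> x_gt0; rewrite Rpower_plus Rpower_1. Qed.

(* Bernoulli's inequality for real exponents p >= 1: the graph of u |-> u^p
   lies above its tangent p u - (p - 1) at u = 1. *)
Lemma bernoulli_real u p : 0 < u -> 1 <= p -> p * u <= Rpower u p + (p - 1).
Proof.
move=> u_gt0 p_ge1; set z := ln u.
have u_exp : u = exp z by rewrite /z exp_ln.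
have pow_u : Rpower u p = exp ((p - 1) * z) * u.
  by rewrite u_exp /Rpower ln_exp -exp_plus; congr exp; ring.
have inv_u : exp (- z) * u = 1.
  by rewrite u_exp -exp_plus Rplus_opp_l exp_0.
have tangent1 : (1 + (p - 1) * z) * u <= exp ((p - 1) * z) * u.
  by apply: Rmult_le_compat_r; [lra | exact: exp_ineq1_le].
have tangent2 : (p - 1) * ((1 - z) * u) <= (p - 1) * (exp (- z) * u).
  apply: Rmult_le_compat_l; first lra.
  by apply: Rmult_le_compat_r; [lra | have := exp_ineq1_le (- z); lra].
rewrite inv_u in tangent2; rewrite pow_u; nra.
Qed.

Lemma jensen_power (T : finType) (w u : T -> R) p :
  (forall i, 0 <= w i) -> (forall i, 0 < u i) -> 1 <= p ->
  rsum w = 1 -> rsum (fun i => w i * u i) = 1 ->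
  1 <= rsum (fun i => w i * Rpower (u i) p).
Proof.
move=> w_ge0 u_gt0 p_ge1 w_sum wu_sum.
have : rsum (fun i => p * (w i * u i)) <=
       rsum (fun i => w i * Rpower (u i) p + (p - 1) * w i).
  apply: rsum_le => i; have := bernoulli_real (u_gt0 i) p_ge1.
  by move/(Rmult_le_compat_l (w i) _ _ (w_ge0 i)); lra.
by rewrite rsum_plus !rsum_scal w_sum wu_sum; lra.
Qed.

Section ArikanBounds.
Variables (T : finType) (x0 : T) (a : T -> R) (g : T -> nat) (r : R).
Hypotheses (a_gt0 : forall x, 0 < a x) (r_gt0 : 0 < r) (g_rank : ranking g).

Let A := rsum a.
Let A_gt0 : 0 < A := rsum_gt0 x0 a_gt0.
Let tilted_moment := rsum (fun x => Rpower (a x) (1 + r) * Rpower (INR (g x)) r).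

Lemma arikan_lower : Rpower A (1 + r) <= Rpower (harm #|T|) r * tilted_moment.
Proof.
have H_gt0 : 0 < harm #|T| by apply: harm_gt0; apply/card_gt0P; exists x0.
set H := harm #|T| in H_gt0 *.
have g_gt0 := ranking_pos g_rank.
pose w x := / (H * INR (g x)).
pose u x := H * INR (g x) * (a x / A).
have Hg_gt0 x : 0 < H * INR (g x) by apply: Rmult_lt_0_compat; [lra | exact: g_gt0].
have u_gt0 x : 0 < u x.
  by apply: Rmult_lt_0_compat; [exact: Hg_gt0 | exact: Rdiv_lt_0_compat].
have w_sum : rsum w = 1.
  rewrite (rsum_ext (g := fun x => / H * / INR (g x))); last by move=> x; rewrite /w Rinv_mult.
  by rewrite rsum_scal (ranking_harm g_rank) -/H; field; lra.
have wu_sum : rsum (fun x => w x * u x) = 1.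
  rewrite (rsum_ext (g := fun x => / A * a x)); last first.
    by move=> x; rewrite /w /u; field; have := g_gt0 x; repeat split; lra.
  by rewrite rsum_scal -/A; field; lra.
have wu_pow x : w x * Rpower (u x) (1 + r) =
    / Rpower A (1 + r) * Rpower H r * (Rpower (a x) (1 + r) * Rpower (INR (g x)) r).
  have aA_gt0 : 0 < a x * / A by exact: Rdiv_lt_0_compat.
  have := Rpower_gt0 A (1 + r); have := g_gt0 x; move=> gx_gt0 powA_gt0.
  rewrite /u /Rdiv -!Rpower_mult_distr ?Rpower_inv ?(Rpower_1plus (x:=H))
          ?(Rpower_1plus (x:=INR (g x))) /w //; try lra; try exact: Rinv_0_lt_compat.
  by field; repeat split; lra.
have := jensen_power (fun x => Rlt_le _ _ (Rinv_0_lt_compat _ (Hg_gt0 x))) u_gt0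
          (ltac:(lra) : 1 <= 1 + r) w_sum wu_sum.
rewrite (rsum_ext wu_pow) rsum_scal -/tilted_moment.
have powA_gt0 := Rpower_gt0 A (1 + r).
move/(Rmult_le_compat_l _ _ _ (Rlt_le _ _ powA_gt0)).
by rewrite -!Rmult_assoc Rinv_r ?Rmult_1_l ?Rmult_1_r; lra.
Qed.

Hypothesis g_decr : forall x x', (g x < g x')%N -> a x' <= a x.

(* The x guessed at rank k carries the least weight among the first k
   guesses, so k times its weight is at most the total weight. *)
Lemma rank_times_weight_le x : INR (g x) * a x <= A.
Proof.
case: (g_rank) => inj [rng _].
have count_below : rsum (fun x' => if (g x' <= g x)%N then 1 else 0) = INR (g x).
  rewrite (ranking_sum g_rank (fun i => if (i <= g x)%N then 1 else 0)) count_le_nat.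
  by case/andP: (rng x) => _ /minn_idPr ->.
rewrite -count_below Rmult_comm -rsum_scal.
apply: rsum_le => x'; case: ifPn => [|_]; last by rewrite Rmult_0_r; exact: Rlt_le.
rewrite Rmult_1_r leq_eqVlt => /orP [/eqP/inj -> | /g_decr]; lra.
Qed.

Lemma arikan_upper : tilted_moment <= Rpower A (1 + r).
Proof.
rewrite /tilted_moment Rpower_1plus // Rmult_comm -rsum_scal; apply: rsum_le => x.
have gx_gt0 : 0 < INR (g x) := ranking_pos g_rank x.
rewrite Rpower_1plus // Rmult_assoc (Rmult_comm (Rpower A r)).
apply: Rmult_le_compat_l; first exact: Rlt_le.
rewrite Rpower_mult_distr //; apply: Rle_Rpower_l; first lra.
split; first exact: Rmult_lt_0_compat.
by rewrite Rmult_comm; exact: rank_times_weight_le.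
Qed.
End ArikanBounds.

Lemma log_ratio_sandwich m d h rho :
  0 < m -> 0 < h -> 0 < rho -> m <= d <= Rpower h rho * m ->
  0 <= / rho * (ln d - ln m) <= ln h.
Proof.
move=> m_gt0 h_gt0 rho_gt0 [le_md le_dm].
have d_gt0 : 0 < d by lra.
have lo := ln_le_compat m_gt0 le_md.
have := ln_le_compat d_gt0 le_dm; rewrite ln_mult ?ln_Rpower //; last exact: Rpower_gt0.
move=> hi; have irho_gt0 : 0 < / rho by exact: Rinv_0_lt_compat.
split; first by apply: Rmult_le_pos; lra.
have -> : ln h = / rho * (rho * ln h) by field; lra.
by apply: Rmult_le_compat_l; lra.
Qed.

Lemma pos_pmf_nonempty (X Y : finType) (P : X -> Y -> R) :
  pos_pmf P -> (0 < #|X|)%N /\ (0 < #|Y|)%N.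
Proof.
move=> [_ P_sum].
have empty_sum (T : finType) (f : T -> R) : #|T| = 0%N -> rsum f = 0.
  by move=> /card0_eq T0; rewrite /rsum big_pred0.
rewrite !lt0n; split; apply/eqP => card0; move: P_sum.
- by rewrite empty_sum //; lra.
- rewrite (rsum_ext (g := fun x => 0 * 0)); last by move=> x; rewrite empty_sum //; ring.
  by rewrite rsum_scal; lra.
Qed.

Lemma Rpower_inv_scaled c t k e : 0 < c -> 0 < t ->
  Rpower (/ (c * Rpower t k)) e = Rpower c (- e) * Rpower t (- (e * k)).
Proof.
move=> c_gt0 t_gt0; rewrite /Rpower ln_Rinv; last exact: Rmult_lt_0_compat c_gt0 (exp_pos _).
by rewrite ln_mult ?ln_exp -?exp_plus; [congr exp; ring | | exact: exp_pos].
Qed.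

Section Redundancy.
Variables (X Y : finType) (x0 : X) (y0 : Y) (P : X -> Y -> R) (rho q : R).
Hypotheses (P_gt0 : forall x y, 0 < P x y) (rho_gt0 : 0 < rho) (q_neq0 : q <> 0).

Let alpha := q / (1 + rho).

Definition guess_moment (G : X -> Y -> nat) : R :=
  rsum (fun x => rsum (fun y => Rpower (INR (G x y)) rho * Rpower (P x y) q)).

(* Arikan's quantity sum_y (sum_x P(x,y)^alpha)^(1+rho), which controls the
   optimal moment up to the factor H_|X|^rho. *)
Definition arikan_sum : R :=
  rsum (fun y => Rpower (rsum (fun x => Rpower (P x y) alpha)) (1 + rho)).

(* P^q = (P^alpha)^(1+rho): the moment is a tilted moment of P^alpha. *)
Lemma tilted_power x y : Rpower (P x y) q = Rpower (Rpower (P x y) alpha) (1 + rho).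
Proof. by rewrite Rpower_mult; congr Rpower; rewrite /alpha; field; lra. Qed.

Lemma guess_moment_rows G : guess_moment G =
  rsum (fun y => rsum (fun x =>
    Rpower (Rpower (P x y) alpha) (1 + rho) * Rpower (INR (G x y)) rho)).
Proof.
rewrite /guess_moment rsum_swap; apply: rsum_ext => y; apply: rsum_ext => x.
by rewrite tilted_power Rmult_comm.
Qed.

Lemma guess_moment_gt0 G : 0 < guess_moment G.
Proof.
apply: (rsum_gt0 x0) => x; apply: (rsum_gt0 y0) => y.
by apply: Rmult_lt_0_compat; exact: Rpower_gt0.
Qed.

Lemma redundancy_moments G Gs :
  redundancy q rho P G Gs = / rho * (ln (guess_moment G) - ln (guess_moment Gs)).
Proof.
have norm_gt0 : 0 < rsum (fun x => rsum (fun y => Rpower (P x y) q)).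
  by apply: (rsum_gt0 x0) => x; apply: (rsum_gt0 y0) => y; exact: Rpower_gt0.
rewrite /redundancy /Eq /Rdiv !ln_mult ?ln_Rinv //; try exact: Rinv_0_lt_compat;
  try exact: guess_moment_gt0.
by rewrite -/(guess_moment G) -/(guess_moment Gs); ring.
Qed.

(* An optimal guessing function guesses, for each y, in order of decreasing
   P(x,y)^alpha: conditioning on y only rescales the column of P. *)
Lemma optimal_guess_decreasing Gs : optimal_guess q P Gs ->
  forall y x x', (Gs x y < Gs x' y)%N -> Rpower (P x' y) alpha <= Rpower (P x y) alpha.
Proof.
move=> [_ Gs_opt] y x x' lt_xx'; have := Gs_opt x x' y lt_xx'.
have col_gt0 : 0 < rsum (fun x1 => P x1 y) by apply: (rsum_gt0 x0) => x1.
set c := Rpower (/ rsum (fun x1 => P x1 y)) q.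
set d := / rsum (fun x1 => Rpower (cond P x1 y) q).
have c_gt0 : 0 < c by exact: Rpower_gt0.
have d_gt0 : 0 < d by apply/Rinv_0_lt_compat/(rsum_gt0 x0) => x1; exact: Rpower_gt0.
have cond_q_eq x1 : cond_q q P x1 y = Rpower (P x1 y) q * (c * d).
  rewrite /cond_q /cond /Rdiv -Rpower_mult_distr ?Rmult_assoc //.
  exact: Rinv_0_lt_compat.
rewrite !cond_q_eq => le_q.
have le_pow : Rpower (P x' y) q <= Rpower (P x y) q.
  by apply: (Rmult_le_reg_r (c * d)); [exact: Rmult_lt_0_compat | lra].
rewrite /alpha /Rdiv -!(Rpower_mult _ q).
apply: Rle_Rpower_l; first by apply/Rlt_le/Rinv_0_lt_compat; lra.
by split; first exact: Rpower_gt0.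
Qed.

Lemma arikan_sum_bounds Gs : optimal_guess q P Gs ->
  guess_moment Gs <= arikan_sum <= Rpower (harm #|X|) rho * guess_moment Gs.
Proof.
move=> Gs_opt; have [Gs_guess _] := Gs_opt.
rewrite guess_moment_rows -rsum_scal; split; apply: rsum_le => y.
- apply: (arikan_upper x0) => //; first by move=> x; exact: Rpower_gt0.
  by move=> x x'; exact: optimal_guess_decreasing.
- by apply: (arikan_lower x0) => //; move=> x; exact: Rpower_gt0.
Qed.

Lemma QG_norm_gt0 (G : X -> Y -> nat) : guessing_fun G -> 0 < INR #|Y| * s_const X q rho.
Proof.
move=> G_guess; apply: Rmult_lt_0_compat; first by apply/INR_nat_gt0/card_gt0P; exists y0.
rewrite /s_const -(ranking_sum (G_guess y0) (fun i => Rpower (INR i) _)).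
by apply: (rsum_gt0 x0) => x; exact: Rpower_gt0.
Qed.

(* The y-th term of the numerator of RE(alpha, q)(P, Q^(G)): the powers of
   the normalizing constant cancel because alpha (1 + rho) = q, and the
   alpha-th powers of Q^(G) sum to a multiple of the harmonic number. *)
Lemma QG_row (G : X -> Y -> nat) y : guessing_fun G ->
  rsum (fun x => Rpower (P x y) q * Rpower (QG q rho G x y) (alpha - q)) *
  Rpower (rsum (fun x => Rpower (QG q rho G x y) alpha)) (q / alpha - 1) =
  Rpower (harm #|X|) rho * rsum (fun x => Rpower (INR (G x y)) rho * Rpower (P x y) q).
Proof.
move=> G_guess; set c := INR #|Y| * s_const X q rho.
have c_gt0 : 0 < c := QG_norm_gt0 G_guess.
have QG_pow e x : Rpower (QG q rho G x y) e =
    Rpower c (- e) * Rpower (INR (G x y)) (- (e * ((1 + rho) / q))).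
  by rewrite /QG -/c Rpower_inv_scaled //; exact: ranking_pos (G_guess y) x.
have row_alpha : rsum (fun x => Rpower (QG q rho G x y) alpha) =
    Rpower c (- alpha) * harm #|X|.
  rewrite -(ranking_harm (G_guess y)) -rsum_scal; apply: rsum_ext => x.
  rewrite QG_pow; have -> : - (alpha * ((1 + rho) / q)) = Ropp 1 by rewrite /alpha; field; lra.
  by rewrite [Rpower (INR _) _]Rpower_Ropp Rpower_1 //; exact: ranking_pos (G_guess y) x.
have row_tilt : rsum (fun x => Rpower (P x y) q * Rpower (QG q rho G x y) (alpha - q)) =
    Rpower c (q - alpha) * rsum (fun x => Rpower (INR (G x y)) rho * Rpower (P x y) q).
  rewrite -rsum_scal; apply: rsum_ext => x.
  rewrite QG_pow; have -> : - ((alpha - q) * ((1 + rho) / q)) = rho by rewrite /alpha; field; lra.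
  by rewrite Ropp_minus_distr; ring.
have c_cancel : Rpower c (q - alpha) * Rpower c (- alpha * rho) = 1.
  by rewrite -Rpower_plus -(Rpower_O c c_gt0); congr Rpower; rewrite /alpha; field; lra.
rewrite row_tilt row_alpha (_ : q / alpha - 1 = rho); last by rewrite /alpha; field; lra.
have H_gt0 : 0 < harm #|X| by apply: harm_gt0; apply/card_gt0P; exists x0.
rewrite -Rpower_mult_distr ?Rpower_mult //; last exact: Rpower_gt0.
by rewrite -[RHS]Rmult_1_l -c_cancel; ring.
Qed.

Lemma RE_power_law (G : X -> Y -> nat) : guessing_fun G ->
  q * RE alpha q P (QG q rho G) =
  ln (harm #|X|) + / rho * (ln (guess_moment G) - ln arikan_sum).
Proof.
move=> G_guess; have H_gt0 : 0 < harm #|X| by apply: harm_gt0; apply/card_gt0P; exists x0.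
have moment_gt0 := guess_moment_gt0 G.
have arikan_gt0 : 0 < arikan_sum by apply: (rsum_gt0 y0) => y; exact: Rpower_gt0.
have powH_gt0 : 0 < Rpower (harm #|X|) rho by exact: Rpower_gt0.
have numer_gt0 : 0 < Rpower (harm #|X|) rho * guess_moment G by exact: Rmult_lt_0_compat.
have iarikan_gt0 : 0 < / arikan_sum by exact: Rinv_0_lt_compat.
have exp_q : q / alpha = 1 + rho by rewrite /alpha; field; lra.
rewrite /RE (rsum_ext (fun y => QG_row y G_guess)) rsum_scal -rsum_swap exp_q.
rewrite -/(guess_moment G) -/arikan_sum /Rdiv ln_mult // ln_Rinv // ln_mult // ln_Rpower.
have -> : q - alpha = q * rho / (1 + rho) by rewrite /alpha; field; lra.
by rewrite /alpha; field; repeat split; lra.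
Qed.
End Redundancy.

Theorem theorem6 (X Y : finType) (P : X -> Y -> R) (rho q : R)
  (G Gstar : X -> Y -> nat) :
  pos_pmf P -> 0 < rho -> q <> 0 ->
  guessing_fun G -> optimal_guess q P Gstar ->
  Rabs (redundancy q rho P G Gstar
        - q * RE (q / (1 + rho)) q P (QG q rho G))
  <= ln (1 + ln (INR #|X|)).
Proof.
move=> pmf rho_gt0 q_neq0 G_guess Gs_opt.
have [/card_gt0P [x0 _] /card_gt0P [y0 _]] := pos_pmf_nonempty pmf.
have X_gt0 : (1 <= #|X|)%N by apply/card_gt0P; exists x0.
have H_gt0 := harm_gt0 X_gt0.
have lnH_le := ln_le_compat H_gt0 (proj2 (harm_bounds X_gt0)).
have [lo hi] := log_ratio_sandwich (guess_moment_gt0 x0 y0 P rho q Gstar) H_gt0 rho_gt0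
  (arikan_sum_bounds x0 pmf.1 rho_gt0 Gs_opt).
rewrite (redundancy_moments x0 y0) (RE_power_law x0 y0 P rho_gt0 q_neq0 G_guess).
set M := guess_moment P rho q G; set Ms := guess_moment P rho q Gstar in lo hi *.
set D := arikan_sum P rho q in lo hi *; set h := harm #|X| in H_gt0 lnH_le hi *.
have -> : / rho * (ln M - ln Ms) - (ln h + / rho * (ln M - ln D)) =
  / rho * (ln D - ln Ms) - ln h by field; lra.
by apply: Rabs_le; lra.
Qed.
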